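(* Let $N\ge1$, $G$ a positive integer, $D>0$, and let $h_1\le\cdots\le h_N$ be positive reals. (a) If $k\in\{1,\dots,N\}$ satisfies $(N-k)D\le h_k\le(N+1-k)D$, $x_k^*=h_k-(N-k)D$ and $S=(N-k)D+x_k^*$, then for every $n\in\{1,\dots,k-1\}$, $$\frac{2\sqrt{GS^3}}{k-n}\le\frac{D\sqrt{G}}{\frac{1}{\sqrt{S}}-\frac{1}{\sqrt{(N-n)D+x_k^*}}}.$$ (b) If $m\in\{1,\dots,N-1\}$ satisfies $h_m<(N-m)D<h_{m+1}$ and $T=(N-m)D$, then for every $n\in\{1,\dots,m\}$, $$\frac{2\sqrt{GT^3}}{m-n+1}\le\frac{D\sqrt{G}}{\frac{1}{\sqrt{T}}-\frac{1}{\sqrt{(N-n+1)D}}}.$$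
   Context: In the paper, $h_n=\sqrt[3]{\rho_n^2/(4GE_n^2)}$ for clients with valuations $\rho_n>0$ and computation cost coefficients $E_n>0$ sorted by $\rho_n/E_n$; the left-hand sides are denoted $B_n$ (resp. $B'_n$) and the right-hand sides $O_n$ (resp. $O'_n$). *)

From Stdlib Require Export Reals.

(* Both parts are instances of one inequality: writing j for the number of
   steps and d = j D, the convexity of x |-> 1/sqrt x gives the tangent bound
   1/sqrt S - 1/sqrt (S + d) <= d / (2 S sqrt S), and inverting it yields
   2 sqrt (G S^3) / j <= D sqrt G / (1/sqrt S - 1/sqrt (S + j D)).
   In (a) one takes S = h_k and j = k - n, in (b) S = T and j = m - n + 1. *)

From Stdlib Require Import Reals Lra Psatz.
Open Scope R_scope.

Lemma sqrt_mult_cube (G S : R) :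
  0 <= G -> 0 <= S -> sqrt (G * S ^ 3) = sqrt G * (S * sqrt S).
Proof.
  intros hG hS.
  replace (S ^ 3) with (S * S * S) by ring.
  rewrite sqrt_mult, (sqrt_mult (S * S)), sqrt_square; try nra.
Qed.

Lemma inv_sqrt_sub_pos (S d : R) :
  0 < S -> 0 < d -> 0 < 1 / sqrt S - 1 / sqrt (S + d).
Proof.
  intros hS hd.
  assert (hs : 0 < sqrt S) by (apply sqrt_lt_R0; lra).
  assert (hsu : sqrt S < sqrt (S + d)) by (apply sqrt_lt_1; lra).
  unfold Rdiv; rewrite !Rmult_1_l.
  apply Rlt_0_minus, Rinv_lt_contravar; nra.
Qed.

Lemma inv_sqrt_sub_le_tangent (S d : R) :
  0 < S -> 0 < d -> 1 / sqrt S - 1 / sqrt (S + d) <= d / (2 * S * sqrt S).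
Proof.
  intros hS hd.
  set (s := sqrt S); set (u := sqrt (S + d)).
  assert (hs : 0 < s) by (apply sqrt_lt_R0; lra).
  assert (hs2 : s * s = S) by (apply sqrt_sqrt; lra).
  assert (hu2 : u * u = S + d) by (apply sqrt_sqrt; lra).
  assert (hsu : s < u) by (apply sqrt_lt_1; lra).
  replace (1 / s - 1 / u) with ((u - s) / (s * u)) by (field; lra).
  replace d with ((u - s) * (u + s)) by nra.
  rewrite <- hs2.
  apply Rmult_le_reg_r with (2 * s * s * s * u).
  { repeat apply Rmult_lt_0_compat; lra. }
  replace ((u - s) / (s * u) * (2 * s * s * s * u)) with (2 * s * s * (u - s))
    by (field; lra).
  replace ((u - s) * (u + s) / (2 * (s * s) * s) * (2 * s * s * s * u))
    with (u * (u + s) * (u - s)) by (field; lra).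
  assert (0 <= (u - s) * (u - s) * (u + 2 * s)) by (apply Rmult_le_pos; nra).
  nra.
Qed.

Lemma sqrt_cube_div_le_inv_sqrt_gap (G S j D : R) :
  0 <= G -> 0 < S -> 0 < j -> 0 < D ->
  2 * sqrt (G * S ^ 3) / j <= D * sqrt G / (1 / sqrt S - 1 / sqrt (S + j * D)).
Proof.
  intros hG hS hj hD.
  assert (hs : 0 < sqrt S) by (apply sqrt_lt_R0; lra).
  assert (hgap := inv_sqrt_sub_pos S (j * D) hS ltac:(nra)).
  assert (htan := inv_sqrt_sub_le_tangent S (j * D) hS ltac:(nra)).
  rewrite sqrt_mult_cube by lra.
  replace (2 * (sqrt G * (S * sqrt S)) / j)
    with (D * sqrt G / (j * D / (2 * S * sqrt S))) by (field; nra).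
  unfold Rdiv at 1 2; apply Rmult_le_compat_l.
  - apply Rmult_le_pos; [lra | apply sqrt_pos].
  - apply Rinv_le_contravar; assumption.
Qed.

Theorem lemma3 (N : nat) (G : nat) (D : R) (h : nat -> R)
  (hN : (1 <= N)%nat) (hG : (1 <= G)%nat) (hD : 0 < D)
  (hpos : forall i : nat, (1 <= i <= N)%nat -> 0 < h i)
  (hsort : forall i j : nat, (1 <= i)%nat -> (i <= j)%nat -> (j <= N)%nat -> h i <= h j) :
  (forall k : nat, (1 <= k <= N)%nat ->
     (INR N - INR k) * D <= h k <= (INR N + 1 - INR k) * D ->
     let xk := h k - (INR N - INR k) * D in
     let S := (INR N - INR k) * D + xk in
     forall n : nat, (1 <= n)%nat -> (n <= k - 1)%nat ->
       2 * sqrt (INR G * S ^ 3) / (INR k - INR n)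
       <= D * sqrt (INR G) /
          (1 / sqrt S - 1 / sqrt ((INR N - INR n) * D + xk)))
  /\
  (forall m : nat, (1 <= m)%nat -> (m <= N - 1)%nat ->
     h m < (INR N - INR m) * D < h (S m) ->
     let T := (INR N - INR m) * D in
     forall n : nat, (1 <= n <= m)%nat ->
       2 * sqrt (INR G * T ^ 3) / (INR m - INR n + 1)
       <= D * sqrt (INR G) /
          (1 / sqrt T - 1 / sqrt ((INR N - INR n + 1) * D))).
Proof.
  split.
  - intros k hk _ xk S0 n hn1 hn2.
    assert (hS0 : S0 = h k) by (unfold S0, xk; ring).
    assert (hhk : 0 < h k) by (apply hpos; lia).
    assert (hnk : INR n < INR k) by (apply lt_INR; lia).
    replace ((INR N - INR n) * D + xk) with (S0 + (INR k - INR n) * D)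
      by (unfold S0, xk; ring).
    apply sqrt_cube_div_le_inv_sqrt_gap; [apply pos_INR | lra | lra | exact hD].
  - intros m hm1 hm2 hbetween T n hn.
    assert (hhm : 0 < h m) by (apply hpos; lia).
    assert (hnm : INR n <= INR m) by (apply le_INR; lia).
    replace ((INR N - INR n + 1) * D) with (T + (INR m - INR n + 1) * D)
      by (unfold T; ring).
    apply sqrt_cube_div_le_inv_sqrt_gap; [apply pos_INR | unfold T; lra | lra | exact hD].
Qed.
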